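(* Let $(G,\cdot)$ be a group, let $A$ be an abelian subgroup of $G$, and let $\mathcal{A}=\{\psi\in\operatorname{End}(G):\psi(G)\le A\}$. For $\psi\in\mathcal{A}$ define $g\circ_\psi h=g\cdot\psi(g)\cdot h\cdot\psi(g)^{-1}$. Then $(\circ_\psi:\psi\in\mathcal{A})$ is a brace block on $G$.
   Context: A skew brace is a triple $(G,\cdot,\circ)$ where $(G,\cdot)$ and $(G,\circ)$ are groups and $g\circ(h\cdot k)=(g\circ h)\cdot g^{-1}\cdot(g\circ k)$ for all $g,h,k$ ($g^{-1}$ the inverse for $\cdot$). A bi-skew brace is a triple $(G,\cdot,\circ)$ such that both $(G,\cdot,\circ)$ and $(G,\circ,\cdot)$ are skew braces. A brace block on a set $G$ is a family $\mathcal{F}$ of group operations on $G$ such that $(G,\circ,\diamond)$ is a bi-skew brace for all $\circ,\diamond\in\mathcal{F}$. *)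

Set Implicit Arguments.
Unset Strict Implicit.

Definition is_group (T : Type) (op : T -> T -> T) : Prop :=
  (forall x y z, op x (op y z) = op (op x y) z) /\
  exists e : T,
    (forall x, op e x = x /\ op x e = x) /\
    (forall x, exists y, op x y = e /\ op y x = e).

Definition is_inverse (T : Type) (op : T -> T -> T) (g g' : T) : Prop :=
  forall e : T, (forall x, op e x = x /\ op x e = x) -> op g g' = e /\ op g' g = e.

Definition is_skew_brace (T : Type) (dot circ : T -> T -> T) : Prop :=
  is_group dot /\ is_group circ /\
  forall g ginv h k, is_inverse dot g ginv ->
    circ g (dot h k) = dot (dot (circ g h) ginv) (circ g k).

Definition is_bi_skew_brace (T : Type) (dot circ : T -> T -> T) : Prop :=
  is_skew_brace dot circ /\ is_skew_brace circ dot.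

Definition brace_block (T I : Type) (P : I -> Prop) (F : I -> T -> T -> T) : Prop :=
  forall i j, P i -> P j -> is_bi_skew_brace (F i) (F j).

Definition circ_psi (T : Type) (mul : T -> T -> T) (inv : T -> T)
  (psi : T -> T) (g h : T) : T :=
  mul (mul (mul g (psi g)) h) (inv (psi g)).

(* Every psi in the family is an endomorphism with abelian image, so psi kills the
   conjugation in g o_psi h = g psi(g) h psi(g)^-1 and becomes a homomorphism
   (G, o_phi) -> (G, .) for every phi in the family: psi (g o_phi h) = psi g psi h.
   This makes o_psi associative, with identity 1 and inverse psi(g)^-1 g^-1 psi(g),
   and reduces the brace identity between o_phi and o_psi to a direct computation
   in which only elements of A have to be commuted. *)

Set Implicit Arguments.
Unset Strict Implicit.

Section CircBraceBlock.

Variables (T : Type) (mul : T -> T -> T) (inv : T -> T) (one : T).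
Hypothesis mulA : forall x y z, mul x (mul y z) = mul (mul x y) z.
Hypothesis mul1g : forall x, mul one x = x.
Hypothesis mulg1 : forall x, mul x one = x.
Hypothesis mulVg : forall x, mul (inv x) x = one.
Hypothesis mulgV : forall x, mul x (inv x) = one.

Local Notation "x * y" := (mul x y).
Local Notation "x ^-1" := (inv x) (at level 2, format "x ^-1").
Local Notation circ := (circ_psi mul inv).

Lemma mulKg x y : x^-1 * (x * y) = y.
Proof. now rewrite mulA, mulVg, mul1g. Qed.

Lemma mulKVg x y : x * (x^-1 * y) = y.
Proof. now rewrite mulA, mulgV, mul1g. Qed.

Lemma invg_unique x y : x * y = one -> x^-1 = y.
Proof. now intros Exy; rewrite <- (mulKg x y), Exy, mulg1. Qed.

Lemma invgM x y : (x * y)^-1 = y^-1 * x^-1.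
Proof. now apply invg_unique; rewrite <- mulA, mulKVg. Qed.

Lemma invgK x : x^-1^-1 = x.
Proof. apply invg_unique, mulVg. Qed.

Lemma invg1 : one^-1 = one.
Proof. apply invg_unique, mul1g. Qed.

(* Normal form: right-associated products of free-group reduced words. *)
#[local] Hint Rewrite <- mulA : gsimpl.
#[local] Hint Rewrite mulKg mulKVg mulVg mulgV mul1g mulg1 invgM invgK invg1 : gsimpl.

Variable A : T -> Prop.
Hypothesis AV : forall x, A x -> A x^-1.
Hypothesis Acomm : forall x y, A x -> A y -> x * y = y * x.

Lemma mulgCA x y : A x -> A y -> forall z, x * (y * z) = y * (x * z).
Proof. now intros Ax Ay z; rewrite !mulA, (Acomm Ax Ay). Qed.

Definition endo_into (psi : T -> T) : Prop :=
  (forall x y, psi (x * y) = psi x * psi y) /\ (forall x, A (psi x)).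

Section OneEndomorphism.

Variable psi : T -> T.
Hypothesis psiM : forall x y, psi (x * y) = psi x * psi y.
Hypothesis psiA : forall x, A (psi x).

Lemma morph1 : psi one = one.
Proof.
now rewrite <- (mulKg (psi one) (psi one)), <- psiM, mul1g, mulVg.
Qed.

Lemma morphV x : psi x^-1 = (psi x)^-1.
Proof. now symmetry; apply invg_unique; rewrite <- psiM, mulgV, morph1. Qed.

Lemma morph_circ (phi : T -> T) g h : psi (circ phi g h) = psi g * psi h.
Proof.
unfold circ_psi; rewrite !psiM, morphV; autorewrite with gsimpl.
now rewrite (mulgCA (psiA (phi g)) (psiA h)); autorewrite with gsimpl.
Qed.

Lemma circ1g x : circ psi one x = x.
Proof. now unfold circ_psi; rewrite morph1; autorewrite with gsimpl. Qed.

Lemma circg1 x : circ psi x one = x.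
Proof. now unfold circ_psi; autorewrite with gsimpl. Qed.

Lemma circA x y z : circ psi x (circ psi y z) = circ psi (circ psi x y) z.
Proof.
now unfold circ_psi at 3; rewrite (morph_circ psi x y); unfold circ_psi;
  autorewrite with gsimpl.
Qed.

Definition circ_inv g := (psi g)^-1 * (g^-1 * psi g).

Lemma morph_circ_inv g : psi (circ_inv g) = (psi g)^-1.
Proof.
unfold circ_inv; rewrite !psiM, !morphV.
now rewrite (mulgCA (AV (psiA (psi g))) (AV (psiA g))); autorewrite with gsimpl.
Qed.

Lemma circVg g : circ psi (circ_inv g) g = one.
Proof.
now unfold circ_psi; rewrite morph_circ_inv; unfold circ_inv; autorewrite with gsimpl.
Qed.

Lemma circgV g : circ psi g (circ_inv g) = one.
Proof. now unfold circ_psi, circ_inv; autorewrite with gsimpl. Qed.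

Lemma circ_is_group : is_group (circ psi).
Proof.
split; [exact circA|].
exists one; split; [split; [apply circ1g | apply circg1]|].
now intros g; exists (circ_inv g); split; [apply circgV | apply circVg].
Qed.

Lemma is_inverse_circ g g' : is_inverse (circ psi) g g' -> g' = circ_inv g.
Proof.
intros Hg'; destruct (Hg' one (fun x => conj (circ1g x) (circg1 x))) as [Egg' _].
now rewrite <- (circ1g g'), <- (circVg g), <- circA, Egg', circg1.
Qed.

End OneEndomorphism.

Lemma circ_brace_law psi phi g h k :
  endo_into psi -> (forall x, A (phi x)) ->
  circ phi g (circ psi h k)
  = circ psi (circ psi (circ phi g h) (circ_inv psi g)) (circ phi g k).
Proof.
intros [psiM psiA] phiA.
rewrite <- (circA psiM psiA).
set (X := circ phi g h); set (g' := circ_inv psi g).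
assert (psiX : psi X = psi g * psi h) by exact (morph_circ psiM psiA phi g h).
assert (psig' : psi g' = (psi g)^-1) by exact (morph_circ_inv psiM psiA g).
unfold circ_psi; rewrite psiX, psig'; unfold X, g', circ_inv, circ_psi.
autorewrite with gsimpl.
rewrite (mulgCA (psiA g) (psiA h)); autorewrite with gsimpl.
rewrite (mulgCA (AV (phiA g)) (psiA h)); autorewrite with gsimpl.
rewrite (mulgCA (psiA g) (AV (psiA h))); autorewrite with gsimpl.
now rewrite (Acomm (AV (psiA h)) (AV (phiA g))).
Qed.

Lemma circ_skew_brace psi phi :
  endo_into psi -> endo_into phi -> is_skew_brace (circ psi) (circ phi).
Proof.
intros [psiM psiA] [phiM phiA].
split; [exact (circ_is_group psiM psiA)|]; split; [exact (circ_is_group phiM phiA)|].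
intros g g' h k Hg'; rewrite (is_inverse_circ psiM psiA Hg').
exact (circ_brace_law g h k (conj psiM psiA) phiA).
Qed.

End CircBraceBlock.

Theorem mainTheorem7
  (T : Type) (mul : T -> T -> T) (inv : T -> T) (one : T)
  (mulA : forall x y z, mul x (mul y z) = mul (mul x y) z)
  (mul1g : forall x, mul one x = x) (mulg1 : forall x, mul x one = x)
  (mulVg : forall x, mul (inv x) x = one) (mulgV : forall x, mul x (inv x) = one)
  (A : T -> Prop)
  (A1 : A one) (AM : forall x y, A x -> A y -> A (mul x y))
  (AV : forall x, A x -> A (inv x))
  (Acomm : forall x y, A x -> A y -> mul x y = mul y x) :
  brace_block
    (fun psi : T -> T =>
       (forall x y, psi (mul x y) = mul (psi x) (psi y)) /\ (forall x, A (psi x)))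
    (fun psi => circ_psi mul inv psi).
Proof.
intros psi phi Hpsi Hphi.
now split; apply (circ_skew_brace mulA mul1g mulg1 mulVg mulgV AV Acomm).
Qed.
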